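(* Let $\mathcal{T}=(V,A,E,f,q)$ be a decorated tree and let $e=\{v,\alpha\}$ be an edge with $v\in V$ and $\alpha\in A\setminus A_0$. If $N_v=0$, then $q(e,v)$ divides $f(\alpha)$.
   Context: A graph is a pair $(X_0,X_1)$ of finite sets such that each element of $X_1$ (an edge) is a $2$-element subset of $X_0$; elements of $X_0$ are cells. A path is a tuple $(x_0,\dots,x_n)$ ($n\ge0$) of cells with $\{x_i,x_{i+1}\}$ an edge for each $i<n$, these edges pairwise distinct; a cell/edge is in the path if it is some $x_i$ / some $\{x_i,x_{i+1}\}$. The graph is a tree if any two cells $x,y$ are joined by a unique path $\gamma_{x,y}$. A decorated tree is $(V,A,E,f,q)$ with $V$ (vertices), $A$ (arrows) finite disjoint sets, $(V\cup A,E)$ a tree, every arrow contained in exactly one edge, $f:A\to\mathbb{Z}$, $q(e,x)\in\mathbb{Z}$ for each $e\in E$, $x\in e$, with $q(e,\alpha)=1$ for $\alpha\in A$, and for each $v\in V$ and distinct edges $e,e'\ni v$, $\gcd(q(e,v),q(e',v))=1$. $A_0=\{\alpha\in A:f(\alpha)=0\}$. An edge $\varepsilon$ is incident to a path $\gamma$ if it is not in $\gamma$ but contains a cell $u$ of $\gamma$; $q(\varepsilon,\gamma):=q(\varepsilon,u)$. For $v\ne\alpha$, $v\in V\cup A$, $\alpha\in A$: $x_{v,\alpha}=f(\alpha)\prod_\varepsilon q(\varepsilon,\gamma_{v,\alpha})$ over edges incident to $\gamma_{v,\alpha}$ (empty product $=1$). For $v\in V\cup A_0$, $N_v=\sum_{\alpha\in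 A\setminus A_0}x_{v,\alpha}$. *)

From HB Require Import structures.
From mathcomp Require Import all_boot all_order all_algebra.
From Stdlib Require Import ClassicalEpsilon.
Set Implicit Arguments. Unset Strict Implicit. Unset Printing Implicit Defensive.
Import Order.TTheory GRing.Theory Num.Theory.
Local Open Scope ring_scope.

Section DecoratedTrees.
Variable T : finType.

(* A path (x_0,...,x_n) is represented by the nonempty sequence x_0 :: ... :: x_n. *)
Definition path_edges (p : seq T) : seq {set T} :=
  match p with
  | [::] => [::]
  | x :: s => pairmap (fun a b => [set a; b]) x s
  end.

Definition is_gpath (E : {set {set T}}) (p : seq T) : bool :=
  [&& p != [::], all (fun e => e \in E) (path_edges p) & uniq (path_edges p)].

Definition is_gpath_between (E : {set {set T}}) (x y : T) (p : seq T) : Prop :=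
  [/\ is_gpath E p, head x p = x & last x p = y].

Definition is_tree (E : {set {set T}}) : Prop :=
  (forall e, e \in E -> #|e| = 2%N) /\
  (forall x y : T, exists! p, is_gpath_between E x y p).

(* the (unique, in a tree) path gamma_{x,y} *)
Definition gamma (E : {set {set T}}) (x y : T) : seq T :=
  epsilon (inhabits [:: x]) (is_gpath_between E x y).

Definition decorated_tree (V A : {set T}) (E : {set {set T}})
    (f : T -> int) (q : {set T} -> T -> int) : Prop :=
  [/\ [disjoint V & A] /\ V :|: A = [set: T], is_tree E,
      (forall a, a \in A -> #|[set e in E | a \in e]| = 1%N),
      (forall e a, e \in E -> a \in A -> a \in e -> q e a = 1) &
      (forall v e e', v \in V -> e \in E -> e' \in E -> e != e' ->
          v \in e -> v \in e' -> coprimez (q e v) (q e' v))].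

Definition A0 (A : {set T}) (f : T -> int) : {set T} := [set a in A | f a == 0].

Definition incident (eps : {set T}) (g : seq T) : bool :=
  (eps \notin path_edges g) && [exists u in eps, u \in g].

Definition q_path (q : {set T} -> T -> int) (eps : {set T}) (g : seq T) : int :=
  match [pick u in eps | u \in g] with Some u => q eps u | None => 1 end.

Definition xva (E : {set {set T}}) (f : T -> int) (q : {set T} -> T -> int)
    (v a : T) : int :=
  f a * \prod_(eps in E | incident eps (gamma E v a)) q_path q eps (gamma E v a).

Definition Nv (A : {set T}) (E : {set {set T}}) (f : T -> int)
    (q : {set T} -> T -> int) (v : T) : int :=
  \sum_(a in A :\: A0 A f) xva E f q v a.

End DecoratedTrees.

From mathcomp Require Import all_boot all_order all_algebra.
From Stdlib Require Import ClassicalEpsilon.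
Set Implicit Arguments. Unset Strict Implicit. Unset Printing Implicit Defensive.
Import Order.TTheory GRing.Theory Num.Theory.
Local Open Scope ring_scope.

(* For every other arrow a' the path from v to a' avoids the leaf a but passes
   through v, so the edge {v, a} is incident to it and contributes the factor
   q({v, a}, v) to x_{v,a'}.  As N_v = 0, q({v, a}, v) then divides x_{v,a}
   too.  The edges incident to the path (v, a) all meet it at v, so their
   q-values at v are coprime to q({v, a}, v), and Gauss's lemma leaves
   q({v, a}, v) | f(a). *)

Lemma coprimez_prodr (I : Type) (r : seq I) (P : pred I) (F : I -> int) (d : int) :
  (forall i, P i -> coprimez d (F i)) -> coprimez d (\prod_(i <- r | P i) F i).
Proof.
move=> dF; apply: (big_ind (coprimez d)) => //; first by rewrite coprimezE coprimen1.
by move=> x y dx dy; rewrite coprimezMr dx dy.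
Qed.

Lemma dvdz_sum_eq0 (I : finType) (P : pred I) (F : I -> int) (d : int) (i0 : I) :
  \sum_(i in P) F i = 0 -> i0 \in P ->
  (forall i, i \in P -> i != i0 -> (d %| F i)%Z) -> (d %| F i0)%Z.
Proof.
move=> sum0 Pi0 dF; move: sum0; rewrite (bigD1 i0) //= => /eqP.
rewrite addr_eq0 => /eqP ->; rewrite rpredN.
by apply: rpred_sum => i /andP[Pi ne_i]; apply: dF.
Qed.

Section TreePaths.
Variable T : finType.
Implicit Types (E : {set {set T}}) (p : seq T).

Lemma mem_path_edges p e : e \in path_edges p ->
  exists2 y, y \in p & exists2 z, z \in p & e = [set y; z].
Proof.
case: p => [|x s] //=; elim: s x => [|y s IHs] x //=.
rewrite inE => /orP[/eqP-> | /IHs[z1 z1s [z2 z2s ->]]].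
  by exists x; rewrite ?mem_head //; exists y; rewrite // !inE eqxx orbT.
by exists z1; [rewrite inE z1s orbT | exists z2; rewrite // inE z2s orbT].
Qed.

Lemma gammaP E x y : is_tree E -> is_gpath_between E x y (gamma E x y).
Proof. by case=> _ /(_ x y)[p [pxy _]]; apply: epsilon_spec; exists p. Qed.

Lemma gamma_edge E x y : is_tree E -> [set x; y] \in E -> gamma E x y = [:: x; y].
Proof.
move=> treeE xyE; case: (treeE) => _ /(_ x y)[p [_ uniq_p]].
rewrite -(uniq_p _ (gammaP x y treeE)); apply: uniq_p.
by split=> //; rewrite /is_gpath /= xyE.
Qed.

Section Leaf.
Variables (E : {set {set T}}) (a : T).
Hypothesis leaf_a : #|[set e in E | a \in e]| = 1%N.

Lemma leaf_edge_unique e1 e2 :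
  e1 \in E -> a \in e1 -> e2 \in E -> a \in e2 -> e1 = e2.
Proof.
move/eqP/cards1P: leaf_a => [e0 E_a] e1E ae1 e2E ae2.
have: e1 \in [set e in E | a \in e] by rewrite inE e1E ae1.
have: e2 \in [set e in E | a \in e] by rewrite inE e2E ae2.
by rewrite E_a !inE => /eqP-> /eqP->.
Qed.

(* An interior cell of a path lies on two distinct path edges. *)
Lemma leaf_notin_gpath p v w :
  is_gpath_between E v w p -> v != a -> w != a -> a \notin p.
Proof.
case=> /and3P[+ pE uniq_p] + last_p va wa; case: p pE uniq_p last_p => // x s.
move=> /= pE uniq_p last_p _ hx; subst x.
rewrite inE negb_or eq_sym va /=; apply/negP => a_s.
move: pE uniq_p last_p; case/splitPr: a_s => s1 s2; rewrite pairmap_cat last_cat /=.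
case: s2 => [|b s2] /=; first by move=> _ _ last_a; rewrite last_a eqxx in wa.
rewrite all_cat cat_uniq /= => /andP[_ /and3P[e1E e2E _]].
case/and3P=> _ _ /andP[+ _] _; rewrite inE negb_or => /andP[/negP[]].
by apply/eqP/(leaf_edge_unique e1E _ e2E); rewrite !inE eqxx ?orbT.
Qed.

End Leaf.

Lemma incident_edge p y z :
  y \in p -> z \notin p -> incident [set y; z] p.
Proof.
move=> yp zp; apply/andP; split; last by apply/existsP; exists y; rewrite !inE eqxx.
apply/negP => /mem_path_edges[u up [w wp /setP/(_ z)]].
by rewrite !inE eqxx orbT => /esym/orP[] /eqP zE; rewrite zE ?up ?wp in zp.
Qed.

Lemma q_path_edge (q : {set T} -> T -> int) p y z :
  y \in p -> z \notin p -> q_path q [set y; z] p = q [set y; z] y.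
Proof.
move=> yp zp; rewrite /q_path; case: pickP => [u | /(_ y)].
  by rewrite !inE => /andP[/orP[] /eqP-> // zp']; rewrite zp' in zp.
by rewrite !inE eqxx yp.
Qed.

End TreePaths.

Section LeafArrow.
Variables (T : finType) (E : {set {set T}}) (f : T -> int) (q : {set T} -> T -> int).
Variables (v a : T).
Hypotheses (treeE : is_tree E) (leaf_a : #|[set e in E | a \in e]| = 1%N).
Hypotheses (vaE : [set v; a] \in E) (va : v != a).

Lemma dvdz_q_xva a' : a' != a -> (q [set v; a] v %| xva E f q v a')%Z.
Proof.
move=> a'a; rewrite /xva; move: (gamma E v a') (gammaP v a' treeE) => p gv.
have ap : a \notin p := leaf_notin_gpath leaf_a gv va a'a.
have vp : v \in p.
  by case: gv => /and3P[+ _ _]; case: p {ap} => [|x s] // _ /= ->; rewrite mem_head.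
rewrite (bigD1 [set v; a]) /=; last by rewrite vaE incident_edge.
by rewrite q_path_edge // dvdz_mull // dvdz_mulr.
Qed.

Hypothesis coprime_at_v : forall e, e \in E -> e != [set v; a] -> v \in e ->
  coprimez (q [set v; a] v) (q e v).

Lemma coprimez_q_incident :
  coprimez (q [set v; a] v)
    (\prod_(e in E | incident e [:: v; a]) q_path q e [:: v; a]).
Proof.
apply: coprimez_prodr => e /andP[eE inc_e].
have ne_e : e != [set v; a].
  by apply: contraTneq inc_e => ->; rewrite /incident /= inE eqxx.
rewrite /q_path; case: pickP => [u /andP[ue] | _]; last first.
  by rewrite coprimezE coprimen1.
rewrite !inE => /orP[] /eqP uE; rewrite uE in ue *; first exact: coprime_at_v.
have a_va : a \in [set v; a] by rewrite !inE eqxx orbT.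
by rewrite (leaf_edge_unique leaf_a eE ue vaE a_va) eqxx in ne_e.
Qed.

End LeafArrow.

Theorem lemma1p12 (T : finType) (V A : {set T}) (E : {set {set T}})
    (f : T -> int) (q : {set T} -> T -> int) :
  decorated_tree V A E f q ->
  forall v a : T, v \in V -> a \in A :\: A0 A f -> [set v; a] \in E ->
  Nv A E f q v = 0 ->
  (q [set v; a] v %| f a)%Z.
Proof.
move=> [[disjVA _] treeE leafA _ coprimeV] v a vV aA' vaE Nv0.
have aA : a \in A by case/setDP: aA'.
have va : v != a by apply: contraTneq aA => <-; rewrite (disjointFr disjVA).
have leaf_a := leafA a aA.
have := dvdz_sum_eq0 Nv0 aA' (fun a' _ a'a => dvdz_q_xva f q treeE leaf_a vaE va a'a).
rewrite /xva gamma_edge // Gauss_dvdzl //.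
apply: coprimez_q_incident => // e eE ne_e ve.
by apply: coprimeV; rewrite // ?inE ?eqxx // eq_sym.
Qed.
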